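(* Let $H$ and $K$ be $2$-connected cubic graphs, where $H$ is a snark with $\pi(H)\ge 5$ and $K$ is a $3$-edge-colourable quasi-bipartite graph with a bipartising set $U$. Let $G=H\oplus_3 K$ be a $3$-sum with distinguished vertices $u\in V(H)$ and $v\in V(K)$, where $\{v\}$ is a component of $K-U$ (so $v$ forms a trivial component of the quasi-partite set of $K$). Then: (i) $\pi(G)\ge 5$; (ii) $G$ is quasi-bipartite with bipartising set $U$ (inherited from $K$), and $H-u$ is an element of the corresponding quasi-partite set of $G$, replacing $\{v\}$.
   Context: Graphs are finite; loops and multiple edges are allowed. A snark is a $2$-connected cubic graph with no proper $3$-edge-colouring. The perfect matching index $\pi(G)$ is the smallest number of perfect matchings of $G$ whose union is $E(G)$. A $2$-connected cubic graph $K$ is quasi-bipartite if it contains an independent vertex set $U$ with $|U|\ge 2$ such that contracting each component of $K-U$ to a vertex yields a bipartite cubic graph (possibly with multiple edges) with partite sets $U$ and the set of contracted vertices; $U$ is a bipartising set and the set of components of $K-U$ is the quasi-partite set. A $3$-sum $H\oplus_3 K$ with distinguished vertices $u,v$ deletes $u$ and $v$ and joins the three dangling edge-ends formerly at $u$ bijectively to the three formerly at $v$. *)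

(* Finite multigraphs (loops and parallel edges allowed). *)
From mathcomp Require Import all_boot.
Set Implicit Arguments. Unset Strict Implicit. Unset Printing Implicit Defensive.

(* A finite multigraph: vertex type, edge type, and the two ends of each
   edge (orientation is irrelevant; a loop has src e = tgt e). *)
Record mgraph := MGraph {
  vert : finType;
  edge : finType;
  src : edge -> vert;
  tgt : edge -> vert }.

Section Basic.
Variable G : mgraph.

Definition incident (w : vert G) (e : edge G) : bool := (src e == w) || (tgt e == w).

(* degree: a loop counts twice *)
Definition deg (w : vert G) : nat :=
  #|[set e : edge G | src e == w]| + #|[set e : edge G | tgt e == w]|.

Definition cubic : Prop := forall w : vert G, deg w = 3.

Definition adj : rel (vert G) :=
  [rel x y | [exists e : edge G,
     ((src e == x) && (tgt e == y)) || ((src e == y) && (tgt e == x))]].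

Definition connected : Prop :=
  (exists x : vert G, True) /\ forall x y : vert G, connect adj x y.

Definition del_adj (w : vert G) : rel (vert G) :=
  [rel a b | (a != w) && (b != w) && adj a b].

Definition two_connected : Prop :=
  [/\ 3 <= #|vert G|, connected &
      forall w x y : vert G, x != w -> y != w -> connect (del_adj w) x y].

Definition perfect_matching (M : {set edge G}) : Prop :=
  (forall e : edge G, e \in M -> src e != tgt e) /\
  (forall x : vert G, #|[set e in M | incident x e]| = 1).

(* pmi_ge n  <->  pi(G) >= n  (with pi(G) = infinity if E(G) is not a
   union of perfect matchings) *)
Definition pmi_ge (n : nat) : Prop :=
  forall (k : nat) (Ms : 'I_k -> {set edge G}),
    (forall i, perfect_matching (Ms i)) ->
    (forall e : edge G, exists i, e \in Ms i) ->
    n <= k.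

Definition share_end (e f : edge G) : bool :=
  [|| src e == src f, src e == tgt f, tgt e == src f | tgt e == tgt f].

(* proper 3-edge-colouring (a loop is adjacent to itself, so none allowed) *)
Definition three_edge_colourable : Prop :=
  exists c : edge G -> 'I_3,
    (forall e : edge G, src e != tgt e) /\
    (forall e f, e != f -> share_end e f -> c e != c f).

Definition snark : Prop := [/\ two_connected, cubic & ~ three_edge_colourable].

Section QB.
Variable U : {set vert G}.

Definition independent : Prop := forall e : edge G, ~~ ((src e \in U) && (tgt e \in U)).

Definition radj : rel (vert G) := [rel a b | (a \notin U) && (b \notin U) && adj a b].

Definition comp (x : vert G) : {set vert G} := [set y | (y \notin U) && connect radj x y].

Definition QP : {set {set vert G}} := [set comp x | x in ~: U].

Definition SU : {set {set vert G}} := [set [set x] | x in U].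

Definition blocks : {set {set vert G}} := SU :|: QP.

Definition block_of (x : vert G) : {set vert G} := if x \in U then [set x] else comp x.

Lemma block_of_in x : block_of x \in blocks.
Proof.
rewrite /block_of /blocks; case: ifP => xU; apply/setUP.
  by left; apply/imsetP; exists x.
by right; apply/imsetP; exists x => //; rewrite in_setC xU.
Qed.

Definition cvert : finType := {B : {set vert G} | B \in blocks}.
(* edges inside a component are contracted away *)
Definition cedge : finType := {e : edge G | block_of (src e) != block_of (tgt e)}.
Definition csrc (e : cedge) : cvert := exist _ (block_of (src (val e))) (block_of_in _).
Definition ctgt (e : cedge) : cvert := exist _ (block_of (tgt (val e))) (block_of_in _).

Definition contraction : mgraph := MGraph csrc ctgt.

Definition bipartite_parts : Prop :=
  forall e : edge contraction,
    ((val (src e) \in SU) && (val (tgt e) \in QP)) ||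
    ((val (src e) \in QP) && (val (tgt e) \in SU)).

End QB.

End Basic.

Definition quasi_bipartite_with (G : mgraph) (U : {set vert G}) : Prop :=
  [/\ two_connected G, cubic G, independent U, 2 <= #|U| &
      cubic (contraction U) /\ bipartite_parts U].

Definition no_loop_at (G : mgraph) (w : vert G) : Prop :=
  forall e : edge G, ~~ ((src e == w) && (tgt e == w)).

Definition other (G : mgraph) (w : vert G) (e : edge G) : vert G :=
  if src e == w then tgt e else src e.

Lemma other_ne (G : mgraph) (w : vert G) (h : no_loop_at w) (e : edge G) :
  incident w e -> other w e != w.
Proof.
rewrite /other /incident; case: ifP => [/eqP s _ | sn /= ht].
  by apply/negP => /eqP t; move: (h e); rewrite s t eqxx.
by rewrite sn.
Qed.

Lemma src_ne (G : mgraph) (w : vert G) (e : edge G) : ~~ incident w e -> src e != w.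
Proof. by rewrite /incident negb_or => /andP[]. Qed.

Lemma tgt_ne (G : mgraph) (w : vert G) (e : edge G) : ~~ incident w e -> tgt e != w.
Proof. by rewrite /incident negb_or => /andP[]. Qed.

Section Sum3.
Variables (H K : mgraph) (u : vert H) (v : vert K).
Hypotheses (hu : no_loop_at u) (hv : no_loop_at v).

(* dangling edges at u in H and at v in K (no loops, so edge-ends = edges) *)
Definition dang_H : finType := {e : edge H | incident u e}.
Definition dang_K : finType := {f : edge K | incident v f}.
Variable sigma : dang_H -> dang_K.  (* the bijection joining dangling ends *)

Definition sv : finType := ({x : vert H | x != u} + {y : vert K | y != v})%type.
Definition se : finType :=
  ({e : edge H | ~~ incident u e} + {f : edge K | ~~ incident v f} + dang_H)%type.

Definition s_src (e : se) : sv :=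
  match e with
  | inl (inl e) => inl (exist _ (src (val e)) (src_ne (valP e)))
  | inl (inr f) => inr (exist _ (src (val f)) (src_ne (valP f)))
  | inr d => inl (exist _ (other u (val d)) (other_ne hu (valP d)))
  end.

Definition s_tgt (e : se) : sv :=
  match e with
  | inl (inl e) => inl (exist _ (tgt (val e)) (tgt_ne (valP e)))
  | inl (inr f) => inr (exist _ (tgt (val f)) (tgt_ne (valP f)))
  | inr d => inr (exist _ (other v (val (sigma d))) (other_ne hv (valP (sigma d))))
  end.

(* H (+)_3 K : delete u and v, join dangling ends via sigma *)
Definition sum3 : mgraph := MGraph s_src s_tgt.

Definition lift_set_K (S : {set vert K}) : {set vert sum3} :=
  [set x : vert sum3 | if x is inr y then val y \in S else false].
Definition H_side : {set vert sum3} :=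
  [set x : vert sum3 | if x is inl _ then true else false].
End Sum3.

Arguments cubic : clear implicits.
Arguments connected : clear implicits.
Arguments two_connected : clear implicits.
Arguments pmi_ge : clear implicits.
Arguments three_edge_colourable : clear implicits.
Arguments snark : clear implicits.

(* In a quasi-bipartite cubic graph every perfect matching M contains exactly one
   edge of the 3-edge cut around each component of G - U: each vertex of the
   independent set U is matched into some component, so M has |U| = |QP U| edges
   leaving components in total, while by parity M leaves every component an odd
   number of times, hence at least once.
   In G = H (+)_3 K the neighbours of v lie in U, so H - u becomes a component of
   G - U attached by the three joining edges, exactly as {v} was in K, and the other
   components are those of K - U; this makes U a bipartising set of G.  Hence every
   perfect matching of G uses exactly one joining edge and induces a perfect matching
   of H, so a cover of G by k perfect matchings yields one of H and k >= 5. *)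

From mathcomp Require Import all_boot zify.
Set Implicit Arguments. Unset Strict Implicit. Unset Printing Implicit Defensive.

Lemma card_set_sum (T : finType) (P : pred T) : #|[set x | P x]| = \sum_x P x.
Proof. by rewrite -sum1dep_card big_mkcond /=; apply: eq_bigr => x _; case: (P x). Qed.

Lemma sum_eq_mem (T : finType) (A : {pred T}) (a : T) :
  \sum_(x in A) (a == x : nat) = (a \in A).
Proof.
case: (boolP (a \in A)) => aA; last first.
  by apply: big1 => x xA; case: eqP => // ax; rewrite ax xA in aA.
rewrite (bigD1 a) //= eqxx big1 // => x /andP[_]; by rewrite eq_sym => /negbTE ->.
Qed.

Lemma sum_eq_mem2 (T : finType) (A : {pred T}) (a b : T) :
  \sum_(x in A) ((a == x) + (b == x)) = (a \in A) + (b \in A).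
Proof. by rewrite big_split /= !sum_eq_mem. Qed.

Lemma sum_eq_card_eq1 (I : finType) (A : {pred I}) (f : I -> nat) :
  {in A, forall i, 0 < f i} -> \sum_(i in A) f i = #|A| -> {in A, forall i, f i = 1}.
Proof.
move=> f_gt0 sum_f i iA.
have : \sum_(j in A) (f j - 1) = 0.
  have : \sum_(j in A) (f j - 1) + \sum_(j in A) 1 = \sum_(j in A) f j.
    by rewrite -big_split /=; apply: eq_bigr => j /f_gt0; lia.
  by rewrite sum1_card sum_f; lia.
move/eqP; rewrite sum_nat_eq0 => /forallP /(_ i); rewrite iA /=.
by have := f_gt0 i iA; lia.
Qed.

Lemma homo_connect_in (T T' : finType) (e : rel T) (e' : rel T') (h : T -> T')
    (P : {pred T}) :
  closed e P -> {in P &, {homo h : x y / e x y >-> e' x y}} ->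
  {in P, forall x y, connect e x y -> connect e' (h x) (h y)}.
Proof.
move=> clP hP x Px y /connectP[p + ->]; elim: p x Px => //= z p IHp x Px /andP[xz pz].
have Pz : z \in P by rewrite -(clP x z xz).
exact: connect_trans (connect1 (hP x z Px Pz xz)) (IHp z Pz pz).
Qed.

Lemma homo_connect (T T' : finType) (e : rel T) (e' : rel T') (h : T -> T') :
  {homo h : x y / e x y >-> e' x y} -> {homo h : x y / connect e x y >-> connect e' x y}.
Proof. by move=> hh x y; apply: (@homo_connect_in _ _ _ _ _ predT) => // ? ? _ _; apply: hh. Qed.

Section Graph.
Variable G : mgraph.
Implicit Types (e : edge G) (a w x y : vert G).

Lemma degE x : deg x = \sum_e ((src e == x) + (tgt e == x)).
Proof. by rewrite /deg !card_set_sum -big_split. Qed.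

Lemma adj_sym : symmetric (@adj G).
Proof. by move=> x y; apply/existsP/existsP => -[e He]; exists e; rewrite orbC. Qed.

Lemma adj_src_tgt e : adj (src e) (tgt e).
Proof. by apply/existsP; exists e; rewrite !eqxx. Qed.

Lemma adj_other w e : incident w e -> adj w (other w e).
Proof.
rewrite /incident /other; case: ifP => [/eqP <- _|_ /= /eqP <-]; first exact: adj_src_tgt.
by rewrite adj_sym adj_src_tgt.
Qed.

Lemma adj_otherP x y : adj x y -> x != y -> exists2 e, incident y e & other y e = x.
Proof.
move=> /existsP[e /orP[] /andP[/eqP s /eqP t]] xy; exists e;
  by rewrite /incident /other s t ?(negbTE xy) ?eqxx ?orbT.
Qed.

Lemma other_eq_ends w x e : incident w e -> x != w ->
  (other w e == x : nat) = (src e == x) + (tgt e == x).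
Proof.
rewrite /incident /other; case: (eqVneq (src e) w) => [->|_] /=.
  by move=> _ /negbTE; rewrite eq_sym => ->.
by move=> /eqP -> /negbTE; rewrite eq_sym => ->; rewrite addn0.
Qed.

Lemma incident_other w x e : incident w e -> x != w -> incident x e = (other w e == x).
Proof.
rewrite /incident /other; case: (eqVneq (src e) w) => [->|_] /=.
  by move=> _ /negbTE; rewrite eq_sym => ->.
by move=> /eqP -> /negbTE; rewrite eq_sym => ->; rewrite orbF.
Qed.

Lemma deg_split w x : x != w ->
  deg x = \sum_(a : {e | ~~ incident w e}) ((src (val a) == x) + (tgt (val a) == x))
        + \sum_(d : {e | incident w e}) (other w (val d) == x : nat).
Proof.
move=> xw; rewrite degE (bigID (incident w)) addnC /=.
rewrite (big_sub (fun e => ~~ incident w e)) (big_sub (incident w)).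
by congr (_ + _); apply: eq_bigr => d _; rewrite (other_eq_ends (valP d) xw).
Qed.

Lemma deg_no_loop w : no_loop_at w -> deg w = #|{: {e | incident w e}}|.
Proof.
move=> noloop; rewrite card_sig -sum1_card degE [RHS]big_mkcond /=.
apply: eq_bigr => e _; have := noloop e; rewrite inE /incident.
by case: (src e == w); case: (tgt e == w).
Qed.

Lemma del_adj_sym w : symmetric (del_adj w).
Proof. by move=> x y; rewrite /del_adj /= adj_sym; case: (x != w); case: (y != w). Qed.

Lemma two_connected_intro : 3 <= #|vert G| ->
  (forall w x y, x != w -> y != w -> connect (del_adj w) x y) -> two_connected G.
Proof.
move=> G3 conn_del; split => //; split.
  by have /card_gt0P[x _] : 0 < #|vert G| by lia; exists x.
move=> x y; have /card_gt0P[w] : 0 < #|~: [set x; y]|.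
  by move: G3; rewrite -(cardsC [set x; y]) cards2; case: (x != y) => /=; lia.
rewrite !inE negb_or => /andP[xw yw].
apply: (connect_sub _ (conn_del w x y _ _)); rewrite 1?eq_sym //.
by move=> p q /andP[_ pq]; apply: connect1.
Qed.

Lemma two_connected_other_vertex w : two_connected G -> {x : vert G | x != w}.
Proof.
case=> G3 _ _; apply: sigW; have : 0 < #|[set~ w]| by rewrite cardsC1; lia.
by case/card_gt0P => x; rewrite !inE => xw; exists x.
Qed.

Definition del2_adj a w : rel (vert G) :=
  [rel p q | [&& p != a, p != w, q != a, q != w & adj p q]].

Lemma two_connected_neighbour_path a w x : two_connected G ->
  x != a -> x != w -> a != w ->
  exists n, [/\ adj n a, n != a, n != w & connect (del2_adj a w) x n].
Proof.
case=> _ _ conn_del xa xw aw; have /connectP[p] := conn_del w x a xw aw.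
elim: p x xa xw => [|y p IHp] x xa xw /=; first by move=> _ xa'; rewrite xa' eqxx in xa.
move=> /andP[/andP[/andP[_ yw] xy] py] a_last.
case: (eqVneq y a) => [ya|ya]; first by exists x; rewrite -ya in xa *; split.
have [n [na n_a nw yn]] := IHp y ya yw py a_last; exists n; split => //.
by apply: connect_trans yn; apply: connect1; rewrite /del2_adj /= xa xw ya yw.
Qed.

Definition cut_size (B : {set vert G}) : nat := \sum_e ((src e \in B) != (tgt e \in B)).

Lemma perfect_matching_deg M x : perfect_matching M ->
  \sum_(e in M) ((src e == x) + (tgt e == x)) = 1.
Proof.
case=> noloop pm; rewrite -(pm x) card_set_sum big_mkcond /=; apply: eq_bigr => e _.
case: (boolP (e \in M)) => //= /noloop; rewrite /incident.
by case: (src e =P x) => [->|_]; case: (tgt e =P x) => [->|_] //=; rewrite eqxx.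
Qed.

Lemma ends_in_split (B : {set vert G}) e :
  (src e \in B) + (tgt e \in B) =
  2 * ((src e \in B) && (tgt e \in B)) + ((src e \in B) != (tgt e \in B)).
Proof. by case: (src e \in B); case: (tgt e \in B). Qed.

(* Counting the ends in [B] of all edges, and of the edges of [M], gives
   [3 |B| = 2 iB + cut_size B] and [|B| = 2 iM + cM]. *)
Lemma perfect_matching_cut_odd M (B : {set vert G}) : cubic G -> perfect_matching M ->
  odd (cut_size B) -> odd (\sum_(e in M) ((src e \in B) != (tgt e \in B))).
Proof.
move=> cub pm.
have ends_B (E : {pred edge G}) (f : vert G -> nat) :
    (forall x, f x = \sum_(e in E) ((src e == x) + (tgt e == x))) ->
    \sum_(x in B) f x = 2 * \sum_(e in E) ((src e \in B) && (tgt e \in B))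
                        + \sum_(e in E) ((src e \in B) != (tgt e \in B)).
  move=> fE; under eq_bigr => x _ do rewrite fE.
  rewrite exchange_big big_distrr -big_split /=; apply: eq_bigr => e _.
  by rewrite sum_eq_mem2 ends_in_split.
have := ends_B predT _ degE; rewrite (eq_bigr (fun=> 3)) // sum_nat_const.
have := ends_B (mem M) (fun=> 1) (fun x => esym (perfect_matching_deg x pm)).
rewrite sum1_card -/(cut_size B).
set cM := \sum_(e in M) _; set iM := \sum_(e in M) _; set iB := \sum_(e in predT) _.
move=> M_B B_B; have /(congr1 odd) : cut_size B + iB.*2 = cM + (cM + 3 * iM).*2 by lia.
by rewrite [odd (_ + iB.*2)]oddD [odd (cM + _)]oddD !odd_double !addbF => ->.
Qed.
End Graph.

Section Contraction.
Variables (G : mgraph) (U : {set vert G}).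
Implicit Types (e : edge G) (x y : vert G) (B C : {set vert G}).

Lemma radj_sym : symmetric (radj U).
Proof. by move=> x y; rewrite /radj /= adj_sym; case: (x \in U); case: (y \in U). Qed.

Lemma mem_comp x : x \notin U -> x \in comp U x.
Proof. by move=> xU; rewrite inE xU connect0. Qed.

Lemma comp_notin x y : y \in comp U x -> y \notin U.
Proof. by rewrite inE => /andP[]. Qed.

Lemma comp_eq x y : y \in comp U x -> comp U y = comp U x.
Proof.
rewrite inE => /andP[_ xy]; apply/setP => z; rewrite !inE.
by rewrite (same_connect (sym_connect_sym radj_sym) xy).
Qed.

Lemma adj_comp x y : x \notin U -> y \notin U -> adj x y -> y \in comp U x.
Proof. by move=> xU yU xy; rewrite inE yU /=; apply: connect1; rewrite /radj /= xU yU. Qed.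

Lemma comp_QP x : x \notin U -> comp U x \in QP U.
Proof. by move=> xU; rewrite imset_f // inE. Qed.

Lemma QP_compE C x : C \in QP U -> x \in C -> C = comp U x.
Proof. by move=> /imsetP[y _ ->] /comp_eq ->. Qed.

Lemma QP_notin C x : C \in QP U -> x \in C -> x \notin U.
Proof. by move=> /QP_compE CE xC; apply: (@comp_notin x); rewrite -CE. Qed.

Lemma mem_QP C x : C \in QP U -> x \notin U -> (x \in C) = (comp U x == C).
Proof. by move=> CQ xU; apply/idP/eqP => [/(QP_compE CQ) ->|<-] //; apply: mem_comp. Qed.

Lemma mem_block_of x : x \in block_of U x.
Proof. by rewrite /block_of; case: ifP => xU; rewrite ?set11 ?mem_comp ?xU. Qed.

Lemma block_ofE B x : B \in blocks U -> (block_of U x == B) = (x \in B).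
Proof.
case/setUP => /imsetP[y yU ->]; apply/eqP/idP => [<-|]; try exact: mem_block_of.
  by move/set1P ->; rewrite /block_of yU.
by move=> xy; rewrite /block_of (negbTE (comp_notin xy)) (comp_eq xy).
Qed.

Lemma block_of_SU x : (block_of U x \in SU U) = (x \in U).
Proof.
rewrite /block_of; case: ifP => xU; first by rewrite imset_f.
apply/imsetP => -[y yU xy]; have := mem_comp (negbT xU).
by rewrite xy => /set1P xy'; rewrite xy' yU in xU.
Qed.

Lemma block_of_QP x : (block_of U x \in QP U) = (x \notin U).
Proof.
rewrite /block_of; case: ifP => xU /=; last exact: comp_QP (negbT xU).
by apply/negP => /QP_notin /(_ (set11 x)); rewrite xU.
Qed.

Lemma deg_contraction (B : vert (contraction U)) : deg B = cut_size (val B).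
Proof.
have valB := valP B; rewrite degE /cut_size.
rewrite (bigID (fun e => block_of U (src e) != block_of U (tgt e))) /=.
rewrite [X in _ + X]big1 ?addn0; last first.
  move=> e /negPn /eqP sBt; rewrite -!(block_ofE _ valB) sBt.
  by rewrite eqxx.
rewrite (big_sub (fun e => block_of U (src e) != block_of U (tgt e))).
apply: eq_bigr => e _; have sBt := valP e.
have eqB (X : cvert U) : (X == B) = (val X == val B) by [].
rewrite !eqB /= -!(block_ofE _ valB).
move: sBt; set a := block_of U _; set b := block_of U _.
by case: (a =P val B) => [->|_]; case: (b =P val B) => [->|_]; rewrite ?eqxx.
Qed.

Lemma cubic_contractionE :
  cubic (contraction U) <-> {in blocks U, forall B, cut_size B = 3}.
Proof.
split=> [cub B BU | cut3 B]; last by rewrite deg_contraction cut3 ?(valP B).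
by rewrite -(cub (exist _ B BU)) deg_contraction.
Qed.

Hypothesis indU : independent U.

Lemma independent_bipartite_parts : bipartite_parts U.
Proof.
move=> e /=; rewrite !block_of_SU !block_of_QP.
have := indU (val e); have := valP e; rewrite /=.
case sU: (src (val e) \in U); case tU: (tgt (val e) \in U) => //= sBt _.
have /comp_eq st := adj_comp (negbT sU) (negbT tU) (adj_src_tgt (val e)).
by move: sBt; rewrite /block_of sU tU st eqxx.
Qed.

Lemma cut_size_set1 x : x \in U -> cut_size [set x] = deg x.
Proof.
move=> xU; rewrite degE /cut_size; apply: eq_bigr => e _; rewrite !inE.
have := indU e.
by case: (src e =P x) => [->|_]; case: (tgt e =P x) => [->|_] //=; rewrite xU.
Qed.

Lemma sum_QP_crossing e :
  \sum_(C in QP U) ((src e \in C) != (tgt e \in C)) = (src e \in U) + (tgt e \in U).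
Proof.
have := indU e; case sU: (src e \in U); case tU: (tgt e \in U) => //= _.
- transitivity (\sum_(C in QP U) (comp U (tgt e) == C : nat)).
    apply: eq_bigr => C CQ; rewrite (mem_QP CQ (negbT tU)).
    by rewrite (contraTF (QP_notin CQ)) ?sU //; case: (comp U _ == C).
  by rewrite sum_eq_mem comp_QP ?tU.
- transitivity (\sum_(C in QP U) (comp U (src e) == C : nat)).
    apply: eq_bigr => C CQ; rewrite (mem_QP CQ (negbT sU)).
    by rewrite (contraTF (QP_notin CQ)) ?tU //; case: (comp U _ == C).
  by rewrite sum_eq_mem comp_QP ?sU.
- apply: big1 => C CQ; rewrite !(mem_QP CQ) ?sU ?tU //.
  by rewrite (comp_eq (adj_comp (negbT sU) (negbT tU) (adj_src_tgt e))) eqxx.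
Qed.

Lemma sum_cut_size_QP : \sum_(C in QP U) cut_size C = \sum_(x in U) deg x.
Proof.
rewrite /cut_size exchange_big /=; under [RHS]eq_bigr => x _ do rewrite degE.
by rewrite [RHS]exchange_big /=; apply: eq_bigr => e _; rewrite sum_QP_crossing sum_eq_mem2.
Qed.

Lemma card_QP : cubic G -> {in QP U, forall C, cut_size C = 3} -> #|QP U| = #|U|.
Proof.
move=> cub cut3; have := sum_cut_size_QP.
by rewrite (eq_bigr (fun=> 3)) // [RHS](eq_bigr (fun=> 3)) // !sum_nat_const; lia.
Qed.

Lemma perfect_matching_cut_QP M : cubic G -> perfect_matching M ->
  {in QP U, forall C, cut_size C = 3} ->
  {in QP U, forall C, \sum_(e in M) ((src e \in C) != (tgt e \in C)) = 1}.
Proof.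
move=> cub pm cut3; apply: sum_eq_card_eq1.
  by move=> C /cut3 cutC; apply/odd_gt0/perfect_matching_cut_odd; rewrite ?cutC.
rewrite exchange_big /= card_QP //.
under eq_bigr => e _ do rewrite sum_QP_crossing -sum_eq_mem2.
by rewrite exchange_big /= -sum1_card; apply: eq_bigr => x _; apply: perfect_matching_deg.
Qed.
End Contraction.

Lemma quasi_bipartite_cut_QP (G : mgraph) (U : {set vert G}) :
  quasi_bipartite_with U -> {in QP U, forall C, cut_size C = 3}.
Proof.
case=> _ _ _ _ [/cubic_contractionE cut3 _] C CQ.
by apply: cut3; rewrite inE CQ orbT.
Qed.

Section ThreeSum.
Variables (H K : mgraph) (u : vert H) (v : vert K).
Variables (hu : no_loop_at u) (hv : no_loop_at v) (sigma : dang_H u -> dang_K v).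
(* Defaults making [vertH] and [vertK] total; they only matter at [u] and [v]. *)
Variables (x0 : {x : vert H | x != u}) (y0 : {y : vert K | y != v}).

Local Notation G := (sum3 hu hv sigma).

Definition vertH (p : vert H) : vert G := inl (insubd x0 p).
Definition vertK (q : vert K) : vert G := inr (insubd y0 q).

Lemma vertH_val a : vertH (val a) = inl a. Proof. by rewrite /vertH valKd. Qed.
Lemma vertK_val b : vertK (val b) = inr b. Proof. by rewrite /vertK valKd. Qed.

Lemma inl_eq_vertH a p : p != u -> (inl a == vertH p) = (val a == p).
Proof. by move=> pu; rewrite /vertH -sum_eqE /= -val_eqE /= val_insubd pu. Qed.

Lemma inr_eq_vertK b q : q != v -> (inr b == vertK q) = (val b == q).
Proof. by move=> qv; rewrite /vertK -sum_eqE /= -val_eqE /= val_insubd qv. Qed.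

Lemma vertH_eq p a : p != u -> (vertH p == inl a) = (p == val a).
Proof. by move=> pu; rewrite eq_sym inl_eq_vertH // eq_sym. Qed.

Lemma vertK_eq q b : q != v -> (vertK q == inr b) = (q == val b).
Proof. by move=> qv; rewrite eq_sym inr_eq_vertK // eq_sym. Qed.

Lemma adj_vertH p q : p != u -> q != u -> adj p q -> adj (vertH p) (vertH q).
Proof.
move=> pu qu /existsP[e pq].
have eu : ~~ incident u e.
  by rewrite /incident; case/orP: pq => /andP[/eqP -> /eqP ->]; rewrite (negbTE pu) (negbTE qu).
by apply/existsP; exists (inl (inl (exist _ e eu))); rewrite /= !inl_eq_vertH.
Qed.

Lemma adj_vertK p q : p != v -> q != v -> adj p q -> adj (vertK p) (vertK q).
Proof.
move=> pv qv /existsP[e pq].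
have ev : ~~ incident v e.
  by rewrite /incident; case/orP: pq => /andP[/eqP -> /eqP ->]; rewrite (negbTE pv) (negbTE qv).
by apply/existsP; exists (inl (inr (exist _ e ev))); rewrite /= !inr_eq_vertK.
Qed.

Lemma adj_dang (d : dang_H u) :
  adj (vertH (other u (val d))) (vertK (other v (val (sigma d)))).
Proof.
apply/existsP; exists (inr d).
by rewrite /= inl_eq_vertH ?inr_eq_vertK ?eqxx ?other_ne ?(valP d) ?(valP (sigma d)).
Qed.

Lemma adj_inl_inr a b : adj (inl a : vert G) (inr b) -> adj v (val b).
Proof.
case/existsP => -[[g|g]|d]; rewrite -!sum_eqE /= ?andbF ?orbF // => /andP[_ /eqP <-].
exact/adj_other/valP.
Qed.

Lemma adj_inr_inr a b : adj (inr a : vert G) (inr b) -> adj (val a) (val b).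
Proof.
case/existsP => -[[g|g]|d]; rewrite -!sum_eqE /= ?andbF // => ab.
by apply/existsP; exists (val g).
Qed.

Lemma card_sum3 : 3 <= #|vert H| -> 3 <= #|vert K| -> 3 <= #|vert G|.
Proof.
have cardH : #|{: {x : vert H | x != u}}| = #|vert H|.-1 by rewrite card_sig cardC1.
have cardK : #|{: {y : vert K | y != v}}| = #|vert K|.-1 by rewrite card_sig cardC1.
by rewrite [#|vert G|]card_sum cardH cardK; lia.
Qed.

Lemma connect_H_hub w0 a : two_connected H ->
  connect (del_adj (inr w0 : vert G)) (inl a) (inl x0).
Proof.
case=> _ _ conn_del; rewrite -(vertH_val a) -vertH_val.
apply: homo_connect (conn_del u _ _ (valP a) (valP x0)) => p q /andP[/andP[pu qu] pq].
by rewrite /del_adj /= adj_vertH.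
Qed.

Lemma connect_K_hub w0 b : two_connected K ->
  connect (del_adj (inl w0 : vert G)) (inr b) (inr y0).
Proof.
case=> _ _ conn_del; rewrite -(vertK_val b) -vertK_val.
apply: homo_connect (conn_del v _ _ (valP b) (valP y0)) => p q /andP[/andP[pv qv] pq].
by rewrite /del_adj /= adj_vertK.
Qed.

(* Inside [H - w0], walk from [a] towards [u]; the last vertex before [u] is joined
   by a dangling edge to [K - v], which is connected. *)
Lemma connect_H_side w0 a : two_connected H -> two_connected K -> val a != val w0 ->
  connect (del_adj (inl w0 : vert G)) (inl a) (inr y0).
Proof.
move=> tcH tcK aw; have uw : u != val w0 by rewrite eq_sym (valP w0).
have [n [nu n_u nw an]] := two_connected_neighbour_path tcH (valP a) aw uw.
have {}an : connect (del_adj (inl w0 : vert G)) (inl a) (vertH n).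
  rewrite -(vertH_val a); apply: homo_connect an => p q /and5P[pu pw qu qw pq].
  by rewrite /del_adj /= !vertH_eq // pw qw adj_vertH.
apply: connect_trans an _; have [e eu en] := adj_otherP nu n_u.
have := adj_dang (exist _ e eu); rewrite /= en; set m := other v _ => nm.
apply: (@connect_trans _ _ (vertK m)); last exact: connect_K_hub.
by apply: connect1; rewrite /del_adj /= vertH_eq // nw nm.
Qed.

Lemma connect_K_side w0 b : two_connected H -> two_connected K -> bijective sigma ->
  val b != val w0 -> connect (del_adj (inr w0 : vert G)) (inr b) (inl x0).
Proof.
move=> tcH tcK [sigma' _ sigmaK] bw; have vw : v != val w0 by rewrite eq_sym (valP w0).
have [n [nv n_v nw bn]] := two_connected_neighbour_path tcK (valP b) bw vw.
have {}bn : connect (del_adj (inr w0 : vert G)) (inr b) (vertK n).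
  rewrite -(vertK_val b); apply: homo_connect bn => p q /and5P[pv pw qv qw pq].
  by rewrite /del_adj /= !vertK_eq // pw qw adj_vertK.
apply: connect_trans bn _; have [f fv fn] := adj_otherP nv n_v.
have := adj_dang (sigma' (exist _ f fv)); rewrite sigmaK /= fn adj_sym.
set m := other u _ => nm.
apply: (@connect_trans _ _ (vertH m)); last exact: connect_H_hub.
by apply: connect1; rewrite /del_adj /= vertK_eq // nw nm.
Qed.

Lemma two_connected_sum3 : two_connected H -> two_connected K -> bijective sigma ->
  two_connected G.
Proof.
move=> tcH tcK sbij; apply: two_connected_intro.
  by apply: card_sum3; [case: tcH | case: tcK].
have to_hub (w z : vert G) : z != w ->
    connect (del_adj w) z (if w is inl _ then inr y0 else inl x0).
  case: w => w0; case: z => c zw /=.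
  - exact: connect_H_side.
  - exact: connect_K_hub.
  - exact: connect_H_hub.
  - exact: connect_K_side.
move=> w x y xw yw; apply: connect_trans (to_hub w x xw) _.
by rewrite (sym_connect_sym (del_adj_sym w)) to_hub.
Qed.

Lemma cubic_sum3 : cubic H -> cubic K -> bijective sigma -> cubic G.
Proof.
move=> cubH cubK sbij; case=> [a|b]; rewrite degE !big_sumType /=.
  rewrite [X in _ + X + _]big1 ?addn0 // -(cubH (val a)) (deg_split (valP a)).
  by congr (_ + _); apply: eq_bigr => d _; rewrite addn0.
rewrite [X in X + _ + _]big1 ?add0n // -(cubK (val b)) (deg_split (valP b)).
congr (_ + _); rewrite (reindex sigma); last exact: onW_bij.
by apply: eq_bigr => d _; rewrite add0n.
Qed.

Local Notation HS := (H_side hu hv sigma).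

Definition restrict_H (M : {set edge G}) : {set edge H} :=
  [set e | if (insub e : option (dang_H u)) is Some d then inr d \in M
           else if insub e is Some g then inl (inl g) \in M else false].

Lemma restrict_H_dang M (d : dang_H u) : (val d \in restrict_H M) = (inr d \in M).
Proof. by rewrite inE valK. Qed.

Lemma restrict_H_inner M (g : {e | ~~ incident u e}) :
  (val g \in restrict_H M) = (inl (inl g) \in M).
Proof. by rewrite inE insubN ?valK ?(valP g). Qed.

Lemma perfect_matching_restrict_H M : perfect_matching M ->
  \sum_(e in M) ((src e \in HS) != (tgt e \in HS)) = 1 ->
  perfect_matching (restrict_H M).
Proof.
move=> [noloop deg1] cross1; split.
  move=> e; rewrite inE; case: insubP => [d _ <- _|_].
    apply/negP => /eqP st; have := hu (val d); have := valP d.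
    by rewrite /incident st orbb => ->.
  by case: insubP => // g _ <- /noloop.
move=> x; rewrite card_set_sum; have [->|xu] := eqVneq x u.
  rewrite -cross1 (bigID (incident u)) /= [X in _ + X]big1 ?addn0; last first.
    by move=> e /negbTE ->; rewrite andbF.
  rewrite (big_sub (incident u)) [RHS]big_mkcond !big_sumType /=.
  rewrite [X in _ = X + _ + _]big1 ?[X in _ = _ + X + _]big1 ?add0n;
    try by move=> g _; rewrite !inE; case: (_ \in M).
  apply: eq_bigr => d _; have du : incident u (val d) := valP d.
  by rewrite restrict_H_dang du andbT !inE; case: (_ \in M).
have := deg1 (inl (Sub x xu)); rewrite card_set_sum !big_sumType /=.
rewrite [X in _ + X + _]big1 ?addn0 => [<-|g _]; last by rewrite /incident -!sum_eqE /= andbF.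
rewrite (bigID (incident u)) /= (big_sub (fun e => ~~ incident u e)) (big_sub (incident u)).
rewrite addnC; congr (_ + _); apply: eq_bigr => g _; congr (_ && _).
- exact: restrict_H_inner.
- exact: restrict_H_dang.
- have gu : incident u (val g) := valP g.
  by rewrite (incident_other gu xu) /incident -!sum_eqE /= orbF.
Qed.

Lemma pmi_ge_sum3 n : pmi_ge H n ->
  (forall M, perfect_matching M -> \sum_(e in M) ((src e \in HS) != (tgt e \in HS)) = 1) ->
  pmi_ge G n.
Proof.
move=> pmiH cross1 k Ms pmMs cover; apply: (pmiH k (restrict_H \o Ms)) => [i|e] /=.
  exact: perfect_matching_restrict_H (pmMs i) (cross1 _ (pmMs i)).
have [eu|eu] := boolP (incident u e).
  have [i Mi] := cover (inr (Sub e eu)); exists i.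
  by rewrite -[e]/(val (Sub e eu : dang_H u)) restrict_H_dang.
have [i Mi] := cover (inl (inl (Sub e eu))); exists i.
by rewrite -[e]/(val (Sub e eu : {e | ~~ incident u e})) restrict_H_inner.
Qed.

Variable U : {set vert K}.
Hypotheses (qbK : quasi_bipartite_with U) (vQP : [set v] \in QP U).
Local Notation liftK := (lift_set_K hu hv sigma).

Lemma v_notin_U : v \notin U.
Proof. exact: QP_notin vQP (set11 v). Qed.

Lemma adj_v_in_U q : adj v q -> q \in U.
Proof.
move=> vq; have [qv|qv] := eqVneq q v.
  move: vq => /existsP[e]; rewrite qv orbb => /andP[/eqP ev /eqP ev'].
  by have := hv e; rewrite ev ev' eqxx.
apply: contraT => qU; have := adj_comp v_notin_U qU vq.
by rewrite -(QP_compE vQP (set11 v)) => /set1P /eqP; rewrite (negbTE qv).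
Qed.

Lemma radj_neq_v p q : radj U p q -> p != v.
Proof.
case/andP=> /andP[_ qU] pq; apply: contraNneq qU => pv.
by rewrite adj_v_in_U // -pv.
Qed.

Lemma mem_liftK C z : (z \in liftK C) = (if z is inr y then val y \in C else false).
Proof. by rewrite inE. Qed.

Lemma mem_H_side z : (z \in HS) = (if z is inl _ then true else false).
Proof. by rewrite inE. Qed.

Lemma H_side_closed : closed (radj (liftK U)) HS.
Proof.
have no_cross a b : radj (liftK U) (inl a) (inr b) = false.
  apply: negbTE; rewrite /radj /= !mem_liftK /=.
  by apply/negP => /andP[bU /adj_inl_inr /adj_v_in_U]; rewrite (negbTE bU).
by case=> [a|a] [b|b]; rewrite ?mem_H_side //= ?no_cross // radj_sym no_cross.
Qed.

Lemma comp_inl a : two_connected H -> comp (liftK U) (inl a) = HS.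
Proof.
case=> _ _ conn_del; apply/setP => z; rewrite inE mem_liftK /=.
apply/andP/idP => [[_ /(closed_connect H_side_closed) <-] | ]; first by rewrite mem_H_side.
rewrite mem_H_side; case: z => // b _; split=> //.
have homoH : {homo vertH : p q / del_adj u p q >-> radj (liftK U) p q}.
  by move=> p q /andP[/andP[pu qu] pq]; rewrite /radj /= !mem_liftK adj_vertH.
by have := homo_connect homoH (conn_del u _ _ (valP a) (valP b)); rewrite !vertH_val.
Qed.

Definition vert_to_K (z : vert G) : vert K := if z is inr b then val b else v.

Lemma comp_inr b : val b \notin U ->
  comp (liftK U) (inr b) = liftK (comp U (val b)).
Proof.
move=> bU; apply/setP => -[c|c]; rewrite !inE /=.
  by apply/negP => /(closed_connect H_side_closed); rewrite !inE.
apply/andP/andP => -[cU bc]; split=> //.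
  have homoK : {in [predC HS] &,
      {homo vert_to_K : x y / radj (liftK U) x y >-> radj U x y}}.
    move=> [x|x] [y|y]; rewrite !inE //= => _ _.
    by rewrite /radj /= !mem_liftK => /andP[/andP[-> ->]] /adj_inr_inr.
  by apply: (homo_connect_in (predC_closed H_side_closed) homoK _ bc); rewrite !inE.
rewrite -(vertK_val b) -(vertK_val c); apply: homo_connect bc => p q pq.
have pv := radj_neq_v pq; have qv : q != v by apply: (radj_neq_v (q := p)); rewrite radj_sym.
move: pq; rewrite /radj /= !mem_liftK /vertK /= !val_insubd pv qv.
by case/andP=> /andP[-> ->]; apply: adj_vertK.
Qed.

Lemma QP_sum3 : two_connected H ->
  QP (liftK U) = HS |: [set liftK C | C in QP U & C != [set v]].
Proof.
move=> tcH; apply/setP => B; rewrite in_setU1; apply/imsetP/orP.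
  case=> -[a|b] zU ->; first by rewrite comp_inl // eqxx; left.
  have bU : val b \notin U by move: zU; rewrite !inE.
  right; rewrite comp_inr //; apply: imset_f; rewrite inE comp_QP //=.
  apply: contraNneq (valP b) => bv; apply/eqP/set1P.
  by rewrite -bv; apply: mem_comp.
case=> [/eqP ->|/imsetP[C]]; first by exists (inl x0); rewrite ?comp_inl // !inE.
rewrite inE => /andP[/imsetP[y yU ->] yv] ->.
have {}yv : y != v by apply: contraNneq yv => ->; rewrite -(QP_compE vQP (set11 v)).
exists (inr (Sub y yv)); first by rewrite !inE; rewrite inE in yU.
by symmetry; apply: comp_inr; rewrite inE in yU.
Qed.

Lemma independent_liftK : independent (liftK U).
Proof. by case: qbK => _ _ indU _ _ [[g|g]|d]; rewrite /= !mem_liftK ?andbF //; apply: indU. Qed.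

Lemma card_liftK : 2 <= #|liftK U|.
Proof.
case: qbK => _ _ _ U2 _; apply: leq_trans U2 _.
have U_v p : p \in U -> p != v by move=> pU; apply: contraNneq v_notin_U => <-.
have inj_hK : {in U &, injective vertK}.
  by move=> p q /U_v pv /U_v qv [] /(congr1 val); rewrite !val_insubd pv qv.
rewrite -(card_in_imset inj_hK); apply/subset_leq_card/subsetP => _ /imsetP[p pU ->].
by rewrite /vertK mem_liftK val_insubd U_v.
Qed.

Lemma cut_size_H_side : cubic H -> cut_size HS = 3.
Proof.
move=> cubH; rewrite /cut_size !big_sumType /=.
rewrite [X in X + _ + _]big1 ?[X in _ + X + _]big1 ?add0n; try by move=> ? _; rewrite !inE.
rewrite -(cubH u) (deg_no_loop hu) -sum1_card.
by apply: eq_bigr => d _; rewrite !inE.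
Qed.

Lemma cut_size_liftK C : C \in QP U -> C != [set v] -> cut_size (liftK C) = 3.
Proof.
move=> CQ Cv.
have vC : v \notin C.
  by apply: contra Cv => vC; rewrite (QP_compE CQ vC) -(QP_compE vQP (set11 v)).
have nbC f : incident v f -> other v f \notin C.
  by move=> fv; apply: contraL (adj_v_in_U (adj_other fv)); apply: QP_notin.
rewrite -(quasi_bipartite_cut_QP qbK CQ) /cut_size !big_sumType /=.
rewrite [X in X + _ + _]big1 ?add0n; last by move=> g _; rewrite !inE.
rewrite [X in _ + X]big1 ?addn0; last first.
  by move=> d _; rewrite !inE /= (negbTE (nbC _ (valP (sigma d)))).
rewrite [RHS](bigID (incident v)) /= [X in _ = X + _]big1 ?add0n; last first.
  move=> f fv; move: fv (nbC f fv); rewrite /other /incident.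
  case: (eqVneq (src f) v) => [-> _ /negbTE -> | _ /eqP tv /negbTE ->].
    by rewrite (negbTE vC).
  by rewrite tv (negbTE vC).
by rewrite (big_sub (fun f => ~~ incident v f)); apply: eq_bigr => g _; rewrite !inE.
Qed.

Lemma quasi_bipartite_sum3 : two_connected H -> cubic H -> bijective sigma ->
  quasi_bipartite_with (liftK U).
Proof.
move=> tcH cubH sbij; have [tcK cubK _ _ _] := qbK.
have cubG := cubic_sum3 cubH cubK sbij; split=> //.
- exact: two_connected_sum3.
- exact: independent_liftK.
- exact: card_liftK.
split; last exact: independent_bipartite_parts independent_liftK.
apply/cubic_contractionE => B; rewrite inE => /orP[/imsetP[z zU ->]|].
  by rewrite (cut_size_set1 independent_liftK zU) cubG.
rewrite QP_sum3 // in_setU1 => /orP[/eqP ->|/imsetP[C]]; first exact: cut_size_H_side.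
by rewrite inE => /andP[CQ Cv] ->; apply: cut_size_liftK.
Qed.
End ThreeSum.

Theorem theorem6p8
  (H K : mgraph) (U : {set vert K}) (u : vert H) (v : vert K)
  (hu : no_loop_at u) (hv : no_loop_at v)
  (sigma : dang_H u -> dang_K v) :
  snark H -> pmi_ge H 5 ->
  two_connected K -> cubic K -> three_edge_colourable K ->
  quasi_bipartite_with U ->
  [set v] \in QP U ->
  bijective sigma ->
  pmi_ge (sum3 hu hv sigma) 5 /\
  quasi_bipartite_with (lift_set_K hu hv sigma U) /\
  QP (lift_set_K hu hv sigma U) =
    H_side hu hv sigma
      |: [set lift_set_K hu hv sigma C | C in QP U & C != [set v]].
Proof.
move=> [tcH cubH _] pmiH tcK _ _ qbK vQP sbij.
have x0 := two_connected_other_vertex u tcH.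
have y0 := two_connected_other_vertex v tcK.
have QP_G := QP_sum3 hu hv sigma x0 y0 vQP tcH.
have qbG := quasi_bipartite_sum3 hu hv x0 y0 qbK vQP tcH cubH sbij.
split; last by split.
apply: pmi_ge_sum3 pmiH _ => M pm.
have [_ cubG indG _ _] := qbG.
apply: (perfect_matching_cut_QP indG cubG pm (quasi_bipartite_cut_QP qbG)).
by rewrite QP_G setU11.
Qed.
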